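(* Every monomorphism $M\colon\mathbf{A}\to\mathbf{B}$ in $\mathbf{Lens}$ is effective: $M$ has a cokernel pair $J_1,J_2\colon\mathbf{B}\to\mathbf{K}$ in $\mathbf{Lens}$, and $M$ is an equaliser of $J_1$ and $J_2$ in $\mathbf{Lens}$.
   Context: A lens $F\colon \mathbf{A}\to\mathbf{B}$ between small categories consists of a functor $F\colon\mathbf{A}\to\mathbf{B}$ (the get functor) together with, for each object $A$ of $\mathbf{A}$, a function $\varphi_{F,A}$ from the set of morphisms of $\mathbf{B}$ with domain $FA$ to the set of morphisms of $\mathbf{A}$ with domain $A$, such that: $F(\varphi_{F,A}b)=b$; $\varphi_{F,A}(\mathrm{id}_{FA})=\mathrm{id}_A$; and $\varphi_{F,A}(b'\circ b)=\varphi_{F,A'}(b')\circ\varphi_{F,A}(b)$ whenever $b$ has domain $FA$, $A'$ is the codomain of $\varphi_{F,A}b$, and $b'$ has domain $FA'$. $\mathbf{Lens}$ is the category of small categories and lenses, with composite of $F\colon\mathbf{A}\to\mathbf{B}$, $G\colon\mathbf{B}\to\mathbf{C}$ having get functor $G\circ F$ and puts $\varphi_{G\circ F,A}(c)=\varphi_{F,A}(\varphi_{G,FA}(c))$. A cokernel pair of $M$ is a pushout of $M$ along itself. *)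

Set Implicit Arguments.

(** A small category presented by its set of objects and its set of
    morphisms, with domain/codomain maps, identities and a composition
    [cmp g f] (= g ∘ f) which is meaningful when [cod f = dom g]. *)
Record Cat := {
  Ob : Type;
  Arr : Type;
  dom : Arr -> Ob;
  cod : Arr -> Ob;
  idm : Ob -> Arr;
  cmp : Arr -> Arr -> Arr;
  dom_idm : forall a, dom (idm a) = a;
  cod_idm : forall a, cod (idm a) = a;
  dom_cmp : forall f g, cod f = dom g -> dom (cmp g f) = dom f;
  cod_cmp : forall f g, cod f = dom g -> cod (cmp g f) = cod g;
  cmp_idl : forall f, cmp (idm (cod f)) f = f;
  cmp_idr : forall f, cmp f (idm (dom f)) = f;
  cmp_assoc : forall f g h, cod f = dom g -> cod g = dom h ->
      cmp h (cmp g f) = cmp (cmp h g) f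
}.
Arguments dom {c} _.
Arguments cod {c} _.
Arguments idm {c} _.
Arguments cmp {c} _ _.

(** A lens F : A -> B: a get functor plus put functions
    [put a b] = φ_{F,a}(b), meaningful when [dom b = F a]. *)
Record Lens (A B : Cat) := {
  gob : Ob A -> Ob B;
  garr : Arr A -> Arr B;
  garr_dom : forall f, dom (garr f) = gob (dom f);
  garr_cod : forall f, cod (garr f) = gob (cod f);
  garr_idm : forall a, garr (idm a) = idm (gob a);
  garr_cmp : forall f g, cod f = dom g -> garr (cmp g f) = cmp (garr g) (garr f);
  put : Ob A -> Arr B -> Arr A;
  put_dom : forall a b, dom b = gob a -> dom (put a b) = a;
  put_get : forall a b, dom b = gob a -> garr (put a b) = b;
  put_idm : forall a, put a (idm (gob a)) = idm a;
  put_cmp : forall a b b', dom b = gob a -> dom b' = gob (cod (put a b)) ->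
      put a (cmp b' b) = cmp (put (cod (put a b)) b') (put a b)
}.
Arguments gob {A B} _ _.
Arguments garr {A B} _ _.
Arguments put {A B} _ _ _.

Definition lens_eq {A B : Cat} (F G : Lens A B) : Prop :=
  (forall a, gob F a = gob G a) /\
  (forall f, garr F f = garr G f) /\
  (forall a b, dom b = gob F a -> put F a b = put G a b).

Definition lens_id (A : Cat) : Lens A A.
Proof.
  refine {| gob := fun a => a; garr := fun f => f; put := fun _ b => b |};
  intros; auto.
Defined.

Definition lens_comp {A B C : Cat} (G : Lens B C) (F : Lens A B) : Lens A C.
Proof.
  refine {| gob := fun a => gob G (gob F a);
            garr := fun f => garr G (garr F f);
            put := fun a c => put F a (put G (gob F a) c) |}.
  - intro f. rewrite garr_dom, garr_dom. reflexivity.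
  - intro f. rewrite garr_cod, garr_cod. reflexivity.
  - intro a. rewrite garr_idm, garr_idm. reflexivity.
  - intros f g H. rewrite garr_cmp by exact H.
    apply garr_cmp. rewrite garr_cod, garr_dom, H. reflexivity.
  - intros a c H. apply put_dom. apply put_dom. exact H.
  - intros a c H. rewrite put_get. apply put_get. exact H.
    apply put_dom. exact H.
  - intro a. rewrite put_idm. apply put_idm.
  - intros a c c' H H'.
    assert (Hd : dom (put G (gob F a) c) = gob F a) by (apply put_dom; exact H).
    assert (HcF : gob F (cod (put F a (put G (gob F a) c))) =
                  cod (put G (gob F a) c)).
    { rewrite <- garr_cod. rewrite put_get by exact Hd. reflexivity. }
    rewrite HcF in H'.
    rewrite (put_cmp G (gob F a) c c' H H').
    rewrite (put_cmp F a (put G (gob F a) c) (put G (cod (put G (gob F a) c)) c') Hd).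
    + rewrite HcF. reflexivity.
    + rewrite HcF. apply put_dom. exact H'.
Defined.

Definition lens_mono {A B : Cat} (M : Lens A B) : Prop :=
  forall (C : Cat) (X Y : Lens C A),
    lens_eq (lens_comp M X) (lens_comp M Y) -> lens_eq X Y.

Definition is_cokernel_pair {A B K : Cat} (M : Lens A B) (J1 J2 : Lens B K)
  : Prop :=
  lens_eq (lens_comp J1 M) (lens_comp J2 M) /\
  forall (C : Cat) (P1 P2 : Lens B C),
    lens_eq (lens_comp P1 M) (lens_comp P2 M) ->
    exists U : Lens K C,
      lens_eq (lens_comp U J1) P1 /\ lens_eq (lens_comp U J2) P2 /\
      forall U' : Lens K C,
        lens_eq (lens_comp U' J1) P1 -> lens_eq (lens_comp U' J2) P2 ->
        lens_eq U' U.

Definition is_equaliser {A B K : Cat} (M : Lens A B) (J1 J2 : Lens B K)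
  : Prop :=
  lens_eq (lens_comp J1 M) (lens_comp J2 M) /\
  forall (C : Cat) (X : Lens C B),
    lens_eq (lens_comp J1 X) (lens_comp J2 X) ->
    exists U : Lens C A,
      lens_eq (lens_comp M U) X /\
      forall U' : Lens C A, lens_eq (lens_comp M U') X -> lens_eq U' U.

(* A monomorphism M : A -> B of lenses is injective on objects and has unique lifts,
   [put M a (garr M f) = f]: test it against the two projections of its kernel pair.
   Lifts along M start in the image of M, so this image is closed under outgoing arrows,
   and the pushout of M along itself is B with the part outside the image doubled.  A lens
   equalising the two coprojections lands in the image of M, where it factors uniquely
   through M by injectivity and uniqueness of lifts. *)

From Stdlib Require Import ClassicalEpsilon ProofIrrelevance Bool.

Lemma proj1_sig_inj {T : Type} {P : T -> Prop} (x y : sig P) :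
  proj1_sig x = proj1_sig y -> x = y.
Proof. exact (eq_sig_hprop (fun t => proof_irrelevance (P t)) x y). Qed.

Lemma gob_cod_put {A B : Cat} (F : Lens A B) a b :
  dom b = gob F a -> gob F (cod (put F a b)) = cod b.
Proof. intro Hb. rewrite <- garr_cod, put_get by exact Hb. reflexivity. Qed.

Definition prod_cat (A B : Cat) : Cat.
Proof.
  refine {| Ob := Ob A * Ob B; Arr := Arr A * Arr B;
            dom := fun f => (dom (fst f), dom (snd f));
            cod := fun f => (cod (fst f), cod (snd f));
            idm := fun a => (idm (fst a), idm (snd a));
            cmp := fun g f => (cmp (fst g) (fst f), cmp (snd g) (snd f)) |}.
  - intros [a1 a2]; simpl; rewrite !dom_idm; reflexivity.
  - intros [a1 a2]; simpl; rewrite !cod_idm; reflexivity.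
  - intros [f1 f2] [g1 g2] H; injection H; intros; simpl; rewrite !dom_cmp by assumption.
    reflexivity.
  - intros [f1 f2] [g1 g2] H; injection H; intros; simpl; rewrite !cod_cmp by assumption.
    reflexivity.
  - intros [f1 f2]; simpl; rewrite !cmp_idl; reflexivity.
  - intros [f1 f2]; simpl; rewrite !cmp_idr; reflexivity.
  - intros [f1 f2] [g1 g2] [h1 h2] H H'; injection H; injection H'; intros; simpl.
    rewrite !cmp_assoc by assumption; reflexivity.
Defined.

Section Subcategory.
Variables (C : Cat) (P : Ob C -> Prop) (Q : Arr C -> Prop).
Hypothesis Q_dom : forall f, Q f -> P (dom f).
Hypothesis Q_cod : forall f, Q f -> P (cod f).
Hypothesis P_idm : forall a, P a -> Q (idm a).
Hypothesis Q_cmp : forall f g, cod f = dom g -> Q f -> Q g -> Q (cmp g f).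

Definition sub_dom (f : sig Q) : sig P := exist P _ (Q_dom _ (proj2_sig f)).
Definition sub_cod (f : sig Q) : sig P := exist P _ (Q_cod _ (proj2_sig f)).
Definition sub_idm (a : sig P) : sig Q := exist Q _ (P_idm _ (proj2_sig a)).
Definition sub_cmp (g f : sig Q) : sig Q :=
  match excluded_middle_informative (cod (proj1_sig f) = dom (proj1_sig g)) with
  | left H => exist Q _ (Q_cmp _ _ H (proj2_sig f) (proj2_sig g))
  | right _ => f
  end.

Lemma sub_cmp_val g f : cod (proj1_sig f) = dom (proj1_sig g) ->
  proj1_sig (sub_cmp g f) = cmp (proj1_sig g) (proj1_sig f).
Proof. intro H; unfold sub_cmp; destruct excluded_middle_informative; tauto. Qed.

Lemma sub_composable f g : sub_cod f = sub_dom g -> cod (proj1_sig f) = dom (proj1_sig g).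
Proof. intro H; exact (f_equal (@proj1_sig _ P) H). Qed.

Definition sub_cat : Cat.
Proof.
  refine (@Build_Cat (sig P) (sig Q) sub_dom sub_cod sub_idm sub_cmp _ _ _ _ _ _ _).
  - intro a; apply proj1_sig_inj; apply dom_idm.
  - intro a; apply proj1_sig_inj; apply cod_idm.
  - intros f g H%sub_composable; apply proj1_sig_inj; simpl.
    rewrite sub_cmp_val by exact H; apply dom_cmp, H.
  - intros f g H%sub_composable; apply proj1_sig_inj; simpl.
    rewrite sub_cmp_val by exact H; apply cod_cmp, H.
  - intro f; apply proj1_sig_inj.
    rewrite sub_cmp_val by (symmetry; apply dom_idm); apply cmp_idl.
  - intro f; apply proj1_sig_inj.
    rewrite sub_cmp_val by apply cod_idm; apply cmp_idr.
  - intros f g h Hfg%sub_composable Hgh%sub_composable; apply proj1_sig_inj.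
    assert (Hgf : cod (proj1_sig (sub_cmp g f)) = dom (proj1_sig h))
      by (rewrite sub_cmp_val, cod_cmp; assumption).
    assert (Hhg : cod (proj1_sig f) = dom (proj1_sig (sub_cmp h g)))
      by (rewrite sub_cmp_val, dom_cmp; assumption).
    rewrite sub_cmp_val, (sub_cmp_val _ f), !sub_cmp_val by assumption.
    apply cmp_assoc; assumption.
Defined.

End Subcategory.

Section KernelPair.
Variables (A B : Cat) (M : Lens A B).

Definition same_gob (p : Ob (prod_cat A A)) : Prop := gob M (fst p) = gob M (snd p).
Definition same_garr (q : Arr (prod_cat A A)) : Prop := garr M (fst q) = garr M (snd q).

Lemma same_garr_dom q : same_garr q -> same_gob (dom q).
Proof. unfold same_garr, same_gob; simpl; rewrite <- !garr_dom; congruence. Qed.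

Lemma same_garr_cod q : same_garr q -> same_gob (cod q).
Proof. unfold same_garr, same_gob; simpl; rewrite <- !garr_cod; congruence. Qed.

Lemma same_gob_idm p : same_gob p -> same_garr (idm p).
Proof. unfold same_garr, same_gob; simpl; rewrite !garr_idm; congruence. Qed.

Lemma same_garr_cmp q r : cod q = dom r ->
  same_garr q -> same_garr r -> same_garr (cmp r q).
Proof.
  destruct q as [q1 q2], r as [r1 r2]; intro H; injection H; intros H2 H1.
  unfold same_garr; simpl; rewrite !garr_cmp by assumption; congruence.
Qed.

Definition kernel_pair : Cat :=
  @sub_cat (prod_cat A A) same_gob same_garr
    same_garr_dom same_garr_cod same_gob_idm same_garr_cmp.

Definition kp1 (p : Ob kernel_pair) : Ob A := fst (proj1_sig p).
Definition kp2 (p : Ob kernel_pair) : Ob A := snd (proj1_sig p).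

Lemma kp_cmp_val (g f : Arr kernel_pair) : cod (proj1_sig f) = dom (proj1_sig g) ->
  proj1_sig (cmp g f) = cmp (c := prod_cat A A) (proj1_sig g) (proj1_sig f).
Proof. apply sub_cmp_val. Qed.

Lemma kp_put_same (p : Ob kernel_pair) b : dom b = kp1 p ->
  same_garr (b, put M (kp2 p) (garr M b)).
Proof.
  intro H; unfold same_garr; simpl; symmetry; apply put_get.
  rewrite garr_dom, H; exact (proj2_sig p).
Qed.

Definition kp_put (p : Ob kernel_pair) (b : Arr A) : Arr kernel_pair :=
  match excluded_middle_informative (dom b = kp1 p) with
  | left H => exist _ _ (kp_put_same p b H)
  | right _ => idm p
  end.

Lemma kp_put_eq p b (H : dom b = kp1 p) :
  kp_put p b = exist _ (b, put M (kp2 p) (garr M b)) (kp_put_same p b H).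
Proof.
  unfold kp_put; destruct excluded_middle_informative; [|tauto].
  apply proj1_sig_inj; reflexivity.
Qed.

Definition kp_fst : Lens kernel_pair A.
Proof.
  refine {| gob := kp1;
            garr := fun q : Arr kernel_pair => fst (proj1_sig q);
            put := kp_put |}; try reflexivity.
  - intros f g H%sub_composable; rewrite kp_cmp_val by exact H; reflexivity.
  - intros p b H; rewrite (kp_put_eq p b H); apply proj1_sig_inj; simpl.
    destruct p as [[p1 p2] Hp]; simpl in *; rewrite put_dom, H; [reflexivity|].
    rewrite garr_dom, H; exact Hp.
  - intros p b H; rewrite (kp_put_eq p b H); reflexivity.
  - intro p; rewrite (kp_put_eq p _ (dom_idm _ _)); apply proj1_sig_inj.
    destruct p as [[p1 p2] Hp]; cbv [kp1 kp2 same_gob] in *; simpl in *.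
    rewrite garr_idm, Hp, put_idm; reflexivity.
  - intros p b b' H H'.
    assert (Hb : dom (garr M b) = gob M (kp2 p))
      by (rewrite garr_dom, H; exact (proj2_sig p)).
    rewrite (kp_put_eq p b H) in H' |- *.
    assert (Hbb : cod b = dom b') by (rewrite H'; reflexivity).
    assert (Hb' : dom (garr M b') = gob M (cod (put M (kp2 p) (garr M b))))
      by (rewrite gob_cod_put, garr_dom, <- Hbb by exact Hb; symmetry; apply garr_cod).
    assert (Hbb' : dom (cmp b' b) = kp1 p) by (rewrite dom_cmp; assumption).
    rewrite (kp_put_eq p _ Hbb'), (kp_put_eq _ b' H').
    apply proj1_sig_inj; rewrite kp_cmp_val; simpl.
    + rewrite garr_cmp, put_cmp by assumption; reflexivity.
    + rewrite H', put_dom by assumption; reflexivity.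
Defined.

Definition kp_swap_ob (p : Ob kernel_pair) : Ob kernel_pair :=
  exist same_gob (kp2 p, kp1 p) (eq_sym (proj2_sig p)).

Definition kp_swap_arr (q : Arr kernel_pair) : Arr kernel_pair :=
  exist same_garr (snd (proj1_sig q), fst (proj1_sig q)) (eq_sym (proj2_sig q)).

Lemma kp_swap_cmp (f g : Arr kernel_pair) : cod f = dom g ->
  kp_swap_arr (cmp g f) = cmp (kp_swap_arr g) (kp_swap_arr f).
Proof.
  intro H; apply sub_composable in H.
  assert (Hs : cod (proj1_sig (kp_swap_arr f)) = dom (proj1_sig (kp_swap_arr g))).
  { destruct f as [[f1 f2] Hf], g as [[g1 g2] Hg]; simpl in *; congruence. }
  apply proj1_sig_inj; rewrite (kp_cmp_val _ _ Hs).
  change (proj1_sig (kp_swap_arr (cmp g f)))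
    with (snd (proj1_sig (cmp g f)), fst (proj1_sig (cmp g f))).
  rewrite (kp_cmp_val _ _ H); reflexivity.
Qed.

Definition kp_swap : Lens kernel_pair kernel_pair.
Proof.
  refine {| gob := kp_swap_ob; garr := kp_swap_arr; put := fun _ q => kp_swap_arr q |};
    try (intros; apply proj1_sig_inj; reflexivity).
  - exact kp_swap_cmp.
  - intros p q H; apply proj1_sig_inj; apply (f_equal (@proj1_sig _ _)) in H.
    destruct p as [[p1 p2] Hp], q as [[q1 q2] Hq]; cbv [kp1 kp2] in H; simpl in *.
    injection H; intros -> ->; reflexivity.
  - intros p q H; apply proj1_sig_inj; destruct q as [[q1 q2] Hq]; reflexivity.
  - intros p q q' _ H'; apply kp_swap_cmp; rewrite H'.
    apply proj1_sig_inj; destruct q as [[q1 q2] Hq]; reflexivity.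
Defined.

Definition kp_snd : Lens kernel_pair A := lens_comp kp_fst kp_swap.

Lemma kp_square : lens_eq (lens_comp M kp_fst) (lens_comp M kp_snd).
Proof.
  split; [|split].
  - intro p; exact (proj2_sig p).
  - intro q; exact (proj2_sig q).
  - intros p b H; simpl in *; change (kp1 (kp_swap_ob p)) with (kp2 p).
    assert (H2 : dom b = gob M (kp2 p)) by (rewrite H; exact (proj2_sig p)).
    rewrite (kp_put_eq p _ (put_dom M _ _ H)), (kp_put_eq (kp_swap_ob p) _ (put_dom M _ _ H2)).
    apply proj1_sig_inj; simpl; rewrite !put_get by assumption; reflexivity.
Qed.

Section Mono.
Hypothesis M_mono : lens_mono M.

Lemma lens_mono_gob_inj a1 a2 : gob M a1 = gob M a2 -> a1 = a2.
Proof.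
  intro H; destruct (M_mono _ _ _ kp_square) as [Hob _].
  exact (Hob (exist same_gob (a1, a2) H)).
Qed.

Lemma lens_mono_put_garr a f : dom f = a -> put M a (garr M f) = f.
Proof.
  intro Hf; destruct (M_mono _ _ _ kp_square) as [_ [Harr _]].
  assert (Hput : dom (garr M f) = gob M a) by (rewrite garr_dom, Hf; reflexivity).
  symmetry; exact (Harr (exist same_garr (f, put M a (garr M f)) (eq_sym (put_get M _ _ Hput)))).
Qed.

End Mono.
End KernelPair.

Arguments lens_mono_gob_inj {A B M} M_mono a1 a2.
Arguments lens_mono_put_garr {A B M} M_mono a f.

Section LiftThroughInjectiveLens.
Variables (A B C : Cat) (M : Lens A B) (X : Lens C B).
Hypothesis M_gob_inj : forall a1 a2, gob M a1 = gob M a2 -> a1 = a2.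
Hypothesis M_put_garr : forall a f, dom f = a -> put M a (garr M f) = f.
Hypothesis X_in_image : forall c, exists a, gob M a = gob X c.

Definition lift_gob (c : Ob C) : Ob A :=
  proj1_sig (constructive_indefinite_description _ (X_in_image c)).

Lemma gob_lift_gob c : gob M (lift_gob c) = gob X c.
Proof. exact (proj2_sig (constructive_indefinite_description _ (X_in_image c))). Qed.

Lemma dom_garr_X f : dom (garr X f) = gob M (lift_gob (dom f)).
Proof. rewrite garr_dom, gob_lift_gob; reflexivity. Qed.

Lemma cod_put_garr_X f : cod (put M (lift_gob (dom f)) (garr X f)) = lift_gob (cod f).
Proof.
  apply M_gob_inj; rewrite gob_cod_put by apply dom_garr_X.
  rewrite garr_cod, gob_lift_gob; reflexivity.
Qed.

Lemma dom_garr_M c a : dom a = lift_gob c -> dom (garr M a) = gob X c.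
Proof. intro Ha; rewrite garr_dom, Ha; apply gob_lift_gob. Qed.

Definition lift : Lens C A.
Proof.
  refine {| gob := lift_gob;
            garr := fun f => put M (lift_gob (dom f)) (garr X f);
            put := fun c a => put X c (garr M a) |}.
  - intro f; apply put_dom, dom_garr_X.
  - exact cod_put_garr_X.
  - intro c; rewrite garr_idm, dom_idm, <- gob_lift_gob; apply put_idm.
  - intros f g H; rewrite garr_cmp, dom_cmp by exact H.
    rewrite put_cmp by (try rewrite cod_put_garr_X, H; apply dom_garr_X).
    rewrite cod_put_garr_X, H; reflexivity.
  - intros c a Ha; apply put_dom, dom_garr_M, Ha.
  - intros c a Ha; rewrite put_dom, put_get by apply dom_garr_M, Ha.
    apply M_put_garr, Ha.
  - intro c; rewrite garr_idm, gob_lift_gob; apply put_idm.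
  - intros c a a' Ha Ha'.
    assert (Haa' : cod a = dom a').
    { apply M_gob_inj; rewrite Ha', gob_lift_gob, gob_cod_put by apply dom_garr_M, Ha.
      symmetry; apply garr_cod. }
    rewrite garr_cmp by exact Haa'; apply put_cmp; [apply dom_garr_M, Ha|].
    rewrite garr_dom, Ha'; apply gob_lift_gob.
Defined.

Lemma lift_factorises : lens_eq (lens_comp M lift) X.
Proof.
  split; [|split].
  - exact gob_lift_gob.
  - intro f; apply put_get, dom_garr_X.
  - intros c b Hb; simpl in *; rewrite put_get by exact Hb; reflexivity.
Qed.

Lemma lift_unique (U : Lens C A) : lens_eq (lens_comp M U) X -> lens_eq U lift.
Proof.
  intros [Hob [Harr Hput]].
  assert (HU : forall c, gob U c = lift_gob c)
    by (intro c; apply M_gob_inj; rewrite gob_lift_gob; apply Hob).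
  split; [exact HU|split].
  - intro f; simpl; rewrite <- (M_put_garr (lift_gob (dom f)) (garr U f)).
    + f_equal; apply Harr.
    + rewrite garr_dom; apply HU.
  - intros c a Ha; simpl.
    rewrite <- (M_put_garr (gob U c) a Ha) at 1.
    rewrite <- (Hput c (garr M a)) by (rewrite garr_dom, Ha; reflexivity); reflexivity.
Qed.

End LiftThroughInjectiveLens.

Arguments lift {A B C} M X M_gob_inj M_put_garr X_in_image.

Lemma orb_absorb (t x : bool) : (x = true -> t = true) -> t || x = t.
Proof. destruct t, x; intuition. Qed.

Section CokernelPair.
Variables (A B : Cat) (M : Lens A B).

Definition in_image (b : Ob B) : bool :=
  if excluded_middle_informative (exists a, gob M a = b) then true else false.

Lemma in_image_gob a : in_image (gob M a) = true.
Proof.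
  unfold in_image; destruct excluded_middle_informative as [_|Hn]; [reflexivity|].
  exfalso; apply Hn; exists a; reflexivity.
Qed.

Lemma in_image_exists b : in_image b = true -> exists a, gob M a = b.
Proof. unfold in_image; destruct excluded_middle_informative; [tauto|discriminate]. Qed.

Lemma in_image_cod g : in_image (dom g) = true -> in_image (cod g) = true.
Proof.
  intros [a Ha]%in_image_exists.
  rewrite <- (put_get M a g) by congruence; rewrite garr_cod; apply in_image_gob.
Qed.

Lemma orb_in_image_dom_cod t g :
  t || in_image (dom g) || in_image (cod g) = t || in_image (cod g).
Proof.
  rewrite <- orb_assoc, (orb_comm (in_image (dom g))).
  rewrite (orb_absorb (in_image (cod g))) by apply in_image_cod; reflexivity.
Qed.

(* Objects and arrows of the cokernel pair are those of [B] tagged by the copy they live in;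
   the two copies of the image of [M], a cosieve by [in_image_cod], are glued and carry the
   tag [true].  An arrow has the tag of its domain, so its codomain tag is recomputed. *)
Definition coker_ob_ok (p : Ob B * bool) : Prop := in_image (fst p) = true -> snd p = true.
Definition coker_arr_ok (q : Arr B * bool) : Prop := in_image (dom (fst q)) = true -> snd q = true.

Definition kob (b : Ob B) (t : bool) : sig coker_ob_ok :=
  exist coker_ob_ok (b, t || in_image b) (fun H => orb_true_intro _ _ (or_intror H)).
Definition karr (g : Arr B) (t : bool) : sig coker_arr_ok :=
  exist coker_arr_ok (g, t || in_image (dom g)) (fun H => orb_true_intro _ _ (or_intror H)).

Definition k_dom (q : sig coker_arr_ok) : sig coker_ob_ok :=
  exist coker_ob_ok (dom (fst (proj1_sig q)), snd (proj1_sig q)) (proj2_sig q).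
Definition k_cod (q : sig coker_arr_ok) : sig coker_ob_ok :=
  kob (cod (fst (proj1_sig q))) (snd (proj1_sig q)).
Definition k_idm (p : sig coker_ob_ok) : sig coker_arr_ok :=
  karr (idm (fst (proj1_sig p))) (snd (proj1_sig p)).
Definition k_cmp (g f : sig coker_arr_ok) : sig coker_arr_ok :=
  karr (cmp (fst (proj1_sig g)) (fst (proj1_sig f))) (snd (proj1_sig f)).

Lemma k_composable f g : k_cod f = k_dom g ->
  cod (fst (proj1_sig f)) = dom (fst (proj1_sig g)) /\
  snd (proj1_sig f) || in_image (cod (fst (proj1_sig f))) = snd (proj1_sig g).
Proof. intro H; apply (f_equal (@proj1_sig _ _)) in H; injection H; auto. Qed.

Lemma kob_normal (p : sig coker_ob_ok) : kob (fst (proj1_sig p)) (snd (proj1_sig p)) = p.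
Proof.
  apply proj1_sig_inj; destruct p as [[b t] Hp]; simpl.
  rewrite orb_absorb by exact Hp; reflexivity.
Qed.

Lemma karr_normal (q : sig coker_arr_ok) : karr (fst (proj1_sig q)) (snd (proj1_sig q)) = q.
Proof.
  apply proj1_sig_inj; destruct q as [[g t] Hq]; simpl.
  rewrite orb_absorb by exact Hq; reflexivity.
Qed.

Lemma karr_glue g t : karr g (t || in_image (dom g)) = karr g t.
Proof. apply proj1_sig_inj; simpl; rewrite <- orb_assoc, orb_diag; reflexivity. Qed.

Lemma karr_dom_glue g t b : dom g = b -> karr g (t || in_image b) = karr g t.
Proof. intros <-; apply karr_glue. Qed.

Definition coker : Cat.
Proof.
  refine (@Build_Cat (sig coker_ob_ok) (sig coker_arr_ok) k_dom k_cod k_idm k_cmp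
            _ _ _ _ _ _ _).
  - intro p; apply proj1_sig_inj; simpl; rewrite dom_idm.
    rewrite orb_absorb by exact (proj2_sig p); destruct p as [[b t] ?]; reflexivity.
  - intro p; rewrite <- (kob_normal p) at 2; apply proj1_sig_inj; simpl.
    rewrite dom_idm, cod_idm, <- orb_assoc, orb_diag; reflexivity.
  - intros f g [Hfg _]%k_composable; apply proj1_sig_inj; simpl.
    rewrite dom_cmp, orb_absorb by (exact Hfg || exact (proj2_sig f)); reflexivity.
  - intros f g [Hfg Htag]%k_composable; apply proj1_sig_inj; simpl.
    rewrite dom_cmp, cod_cmp by exact Hfg.
    rewrite (orb_absorb (snd _)) by exact (proj2_sig f).
    rewrite <- Htag, Hfg, orb_in_image_dom_cod; reflexivity.
  - intro f; rewrite <- (karr_normal f) at 3; unfold k_cmp; simpl; rewrite cmp_idl; reflexivity.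
  - intro f; rewrite <- (karr_normal f) at 3; unfold k_cmp, k_idm; cbn [k_dom proj1_sig fst snd].
    rewrite cmp_idr; cbn [karr proj1_sig snd]; rewrite dom_idm; apply karr_glue.
  - intros f g h [Hfg _]%k_composable [Hgh _]%k_composable; unfold k_cmp; simpl.
    rewrite karr_dom_glue by (apply dom_cmp; rewrite cod_cmp by exact Hfg; exact Hgh).
    rewrite cmp_assoc by assumption; reflexivity.
Defined.

Definition coproj (t : bool) : Lens B coker.
Proof.
  refine {| gob := fun b => kob b t : Ob coker;
            garr := fun g => karr g t : Arr coker;
            put := fun _ (k : Arr coker) => fst (proj1_sig k) |}; try reflexivity.
  - intro g; apply proj1_sig_inj; simpl; rewrite orb_in_image_dom_cod; reflexivity.
  - intro b; symmetry; exact (karr_dom_glue _ t _ (dom_idm _ b)).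
  - intros f g Hfg; symmetry; exact (karr_dom_glue _ t _ (dom_cmp _ f g Hfg)).
  - intros b k H; apply (f_equal (@proj1_sig _ _)) in H; injection H; auto.
  - intros b k H; apply (f_equal (@proj1_sig _ _)) in H; injection H; intros Ht Hb.
    rewrite <- (karr_normal k) at 2; rewrite Ht, <- Hb; symmetry; apply karr_glue.
Defined.

Lemma coproj_coequalise : lens_eq (lens_comp (coproj true) M) (lens_comp (coproj false) M).
Proof.
  split; [|split]; try reflexivity.
  - intro a; apply proj1_sig_inj; simpl; rewrite in_image_gob; reflexivity.
  - intro f; apply proj1_sig_inj; simpl; rewrite garr_dom, in_image_gob; reflexivity.
Qed.

Lemma coproj_jointly_surjective_ob (k : Ob coker) : exists t b, k = gob (coproj t) b.
Proof. exists (snd (proj1_sig k)), (fst (proj1_sig k)); symmetry; apply kob_normal. Qed.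

Lemma coproj_jointly_surjective_arr (q : Arr coker) : exists t g, q = garr (coproj t) g.
Proof. exists (snd (proj1_sig q)), (fst (proj1_sig q)); symmetry; apply karr_normal. Qed.

Section Copair.
Variables (C : Cat) (P1 P2 : Lens B C).
Hypothesis P_coequalise : lens_eq (lens_comp P1 M) (lens_comp P2 M).

Definition leg (t : bool) : Lens B C := if t then P1 else P2.

Lemma legs_agree_gob b : in_image b = true -> gob P1 b = gob P2 b.
Proof. intros [a <-]%in_image_exists; exact (proj1 P_coequalise a). Qed.

Lemma legs_agree_garr g : in_image (dom g) = true -> garr P1 g = garr P2 g.
Proof.
  intros [a Ha]%in_image_exists.
  rewrite <- (put_get M a g) by congruence; exact (proj1 (proj2 P_coequalise) _).
Qed.

Lemma legs_agree_put b c : in_image b = true -> dom c = gob P1 b -> put P1 b c = put P2 b c.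
Proof.
  intros [a <-]%in_image_exists Hc.
  assert (Hc2 : dom c = gob P2 (gob M a))
    by (rewrite Hc; exact (proj1 P_coequalise a)).
  rewrite <- (put_get M a (put P1 _ c)), <- (put_get M a (put P2 _ c)) by
    (apply put_dom; assumption).
  f_equal; exact (proj2 (proj2 P_coequalise) a c Hc).
Qed.

Lemma gob_leg_glue t b : gob (leg (t || in_image b)) b = gob (leg t) b.
Proof.
  destruct t; [reflexivity|]; simpl.
  destruct (in_image b) eqn:Hb; [apply legs_agree_gob, Hb | reflexivity].
Qed.

Lemma garr_leg_glue t g : garr (leg (t || in_image (dom g))) g = garr (leg t) g.
Proof.
  destruct t; [reflexivity|]; simpl.
  destruct (in_image (dom g)) eqn:Hg; [apply legs_agree_garr, Hg | reflexivity].
Qed.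

Lemma put_leg_glue t b c :
  dom c = gob (leg t) b -> put (leg (t || in_image b)) b c = put (leg t) b c.
Proof.
  destruct t; [reflexivity|]; simpl; intro Hc.
  destruct (in_image b) eqn:Hb; [|reflexivity].
  apply legs_agree_put; [exact Hb|]; rewrite Hc; symmetry; apply legs_agree_gob, Hb.
Qed.

Definition copair : Lens coker C.
Proof.
  refine {| gob := fun k : Ob coker => gob (leg (snd (proj1_sig k))) (fst (proj1_sig k));
            garr := fun q : Arr coker => garr (leg (snd (proj1_sig q))) (fst (proj1_sig q));
            put := fun (k : Ob coker) c =>
              karr (put (leg (snd (proj1_sig k))) (fst (proj1_sig k)) c) (snd (proj1_sig k))
              : Arr coker |}.
  - intro q; apply garr_dom.
  - intro q; simpl; rewrite garr_cod, gob_leg_glue; reflexivity.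
  - intro k; simpl; rewrite garr_leg_glue; apply garr_idm.
  - intros f g [Hfg Htag]%k_composable; simpl.
    rewrite garr_leg_glue, garr_cmp, <- Htag, Hfg, garr_leg_glue by exact Hfg.
    reflexivity.
  - intros k c Hc; apply proj1_sig_inj; simpl; rewrite put_dom by exact Hc.
    exact (f_equal (@proj1_sig _ _) (kob_normal k)).
  - intros k c Hc; simpl; rewrite garr_leg_glue; apply put_get, Hc.
  - intro k; rewrite put_idm; reflexivity.
  - intros k c c' Hc Hc'.
    set (t := snd (proj1_sig k)) in *; set (b := fst (proj1_sig k)) in *.
    set (x := put (leg t) b c).
    assert (Hx : dom x = b) by (apply put_dom; exact Hc).
    simpl in Hc' |- *; fold x in Hc' |- *.
    rewrite orb_in_image_dom_cod in Hc' |- *; rewrite gob_leg_glue in Hc'.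
    rewrite put_leg_glue, put_cmp by assumption; fold x.
    unfold k_cmp; cbn [karr proj1_sig fst snd].
    symmetry; apply karr_dom_glue, dom_cmp.
    symmetry; apply put_dom, Hc'.
Defined.

Lemma copair_coproj t : lens_eq (lens_comp copair (coproj t)) (leg t).
Proof.
  split; [|split].
  - exact (gob_leg_glue t).
  - exact (garr_leg_glue t).
  - intros b c Hc; simpl in *; apply put_leg_glue.
    rewrite Hc; exact (gob_leg_glue t b).
Qed.

Lemma copair_unique (U : Lens coker C) :
  (forall t, lens_eq (lens_comp U (coproj t)) (leg t)) -> lens_eq U copair.
Proof.
  intro HU; split; [|split].
  - intro k; destruct (coproj_jointly_surjective_ob k) as [t [b ->]].
    transitivity (gob (leg t) b); [exact (proj1 (HU t) b)|].
    symmetry; exact (gob_leg_glue t b).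
  - intro q; destruct (coproj_jointly_surjective_arr q) as [t [g ->]].
    transitivity (garr (leg t) g); [exact (proj1 (proj2 (HU t)) g)|].
    symmetry; exact (garr_leg_glue t g).
  - intros k c Hc; destruct (coproj_jointly_surjective_ob k) as [t [b ->]].
    assert (Hc' : dom c = gob (leg t) b) by (rewrite Hc; exact (proj1 (HU t) b)).
    pose proof (proj2 (proj2 (HU t)) b c Hc) as Hput; simpl in Hput.
    assert (Htag : snd (proj1_sig (put U (kob b t) c)) = t || in_image b)
      by exact (f_equal (fun k => snd (proj1_sig k)) (put_dom U _ _ Hc)).
    change (put U (kob b t) c = karr (put (leg (t || in_image b)) b c) (t || in_image b)).
    rewrite <- (karr_normal (put U _ c)), Hput, Htag, put_leg_glue by exact Hc'.
    reflexivity.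
Qed.
End Copair.

Lemma coker_is_cokernel_pair : is_cokernel_pair M (coproj true) (coproj false).
Proof.
  split; [exact coproj_coequalise|].
  intros C P1 P2 HP; exists (copair _ _ _ HP).
  split; [exact (copair_coproj _ _ _ HP true)|split; [exact (copair_coproj _ _ _ HP false)|]].
  intros U H1 H2; apply copair_unique; intros []; assumption.
Qed.
End CokernelPair.

Arguments coker {A B} M.
Arguments coproj {A B} M t.

Lemma coker_equaliser {A B : Cat} (M : Lens A B) :
  lens_mono M -> is_equaliser M (coproj M true) (coproj M false).
Proof.
  intro M_mono; split; [apply coproj_coequalise|].
  intros C X HX.
  assert (X_in_image : forall c, exists a, gob M a = gob X c).
  { intro c; apply in_image_exists; symmetry.
    exact (f_equal (fun k => snd (proj1_sig k)) (proj1 HX c)). }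
  exists (lift M X (lens_mono_gob_inj M_mono) (lens_mono_put_garr M_mono) X_in_image).
  split; [apply lift_factorises | intros U HU; apply lift_unique, HU].
Qed.

Theorem proposition5p7 :
  forall (A B : Cat) (M : Lens A B),
    lens_mono M ->
    exists (K : Cat) (J1 J2 : Lens B K),
      is_cokernel_pair M J1 J2 /\ is_equaliser M J1 J2.
Proof.
  intros A B M M_mono.
  exists (coker M), (coproj M true), (coproj M false).
  split; [apply coker_is_cokernel_pair | apply coker_equaliser, M_mono].
Qed.
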